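(* Let $n\ge 3$. For every set $S$ of $n$ red and blue points in the plane in general position containing at least one point of each color, every edge of every minimum bichromatic spanning tree of $S$ crosses at most $n-3$ other edges of that tree. Moreover, this bound is best possible: for every $n\ge 3$ there exists a set of $n$ red and blue points in general position having a minimum bichromatic spanning tree in which some edge crosses exactly $n-3$ other edges.
   Context: A set of points is in general position if no three of them are collinear. A bichromatic spanning tree of a set $S$ of red and blue points is a spanning tree on vertex set $S$, drawn with straight-line segment edges, in which every edge has one red and one blue endpoint. A minimum bichromatic spanning tree (MinBST) is a bichromatic spanning tree of minimum total Euclidean edge length. Two edges (segments) cross if they share a point that is interior to both segments. *)

From HB Require Import structures.
From mathcomp Require Import all_boot all_order all_algebra.
From mathcomp Require Import boolp reals.
Set Implicit Arguments. Unset Strict Implicit. Unset Printing Implicit Defensive.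
Import Order.TTheory GRing.Theory Num.Theory.
Local Open Scope ring_scope.

Section Defs.
Variable R : realType.
Definition point := (R * R)%type.

Definition dist (a b : point) : R := Num.sqrt ((a.1 - b.1) ^+ 2 + (a.2 - b.2) ^+ 2).

(* orientation determinant; zero iff a, b, c collinear *)
Definition orient (a b c : point) : R :=
  (b.1 - a.1) * (c.2 - a.2) - (b.2 - a.2) * (c.1 - a.1).

Variable n : nat.

Definition general_position (p : 'I_n -> point) : Prop :=
  injective p /\
  forall i j k : 'I_n, i != j -> j != k -> i != k -> orient (p i) (p j) (p k) != 0.

Definition seg_cross (a b c d : point) : Prop :=
  exists s t : R, [/\ 0 < s < 1, 0 < t < 1,
    a.1 + s * (b.1 - a.1) = c.1 + t * (d.1 - c.1) &
    a.2 + s * (b.2 - a.2) = c.2 + t * (d.2 - c.2)].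

(* A bichromatic edge set on vertices 'I_n with colouring col (true = red):
   each edge is stored once, as the ordered pair (red endpoint, blue endpoint). *)
Definition bichromatic (col : 'I_n -> bool) (E : {set 'I_n * 'I_n}) : Prop :=
  forall e, e \in E -> col e.1 /\ ~~ col e.2.

Definition adj (E : {set 'I_n * 'I_n}) : rel 'I_n :=
  fun i j => ((i, j) \in E) || ((j, i) \in E).

Definition connected_graph (E : {set 'I_n * 'I_n}) : Prop :=
  forall i j : 'I_n, connect (adj E) i j.

(* acyclic: every edge is a bridge, i.e. lies on no cycle *)
Definition acyclic (E : {set 'I_n * 'I_n}) : Prop :=
  forall e, e \in E -> ~~ connect (adj (E :\ e)) e.1 e.2.

Definition spanning_tree (E : {set 'I_n * 'I_n}) : Prop :=
  connected_graph E /\ acyclic E.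

Definition bst (col : 'I_n -> bool) (E : {set 'I_n * 'I_n}) : Prop :=
  bichromatic col E /\ spanning_tree E.

Definition weight (p : 'I_n -> point) (E : {set 'I_n * 'I_n}) : R :=
  \sum_(e in E) dist (p e.1) (p e.2).

Definition min_bst (p : 'I_n -> point) (col : 'I_n -> bool)
    (E : {set 'I_n * 'I_n}) : Prop :=
  bst col E /\ forall E', bst col E' -> weight p E <= weight p E'.

Definition crossings (p : 'I_n -> point) (E : {set 'I_n * 'I_n}) (e : 'I_n * 'I_n) : nat :=
  #|[set f in E | (f != e) && `[< seg_cross (p e.1) (p e.2) (p f.1) (p f.2) >]]|.

End Defs.

From HB Require Import structures.
From mathcomp Require Import all_boot all_order all_algebra.
From mathcomp Require Import boolp reals.
From mathcomp Require Import zify ring lra.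
Import Order.TTheory GRing.Theory Num.Theory.
Set Implicit Arguments. Unset Strict Implicit. Unset Printing Implicit Defensive.

(* Upper bound: two bichromatic edges sharing an endpoint span three distinct
   points, which in general position are not collinear, so the two segments do
   not cross.  Hence the edges crossing an edge e avoid both endpoints of e: they
   form a forest in which the endpoints of e and any third vertex lie in
   different components, so there are at most n - 3 of them.

   Lower bound: put the points on the parabola y = x^2, red points at abscissae
   4 and -2, blue points at -1 and at 1/k for 3 <= k < n.  The tree joins 4 to -1
   and -2 to every blue point; the chord from 4 to -1 crosses the n - 3 chords
   from -2 to 1/k.  It is minimal because every blue point is closer to -2 than to
   4, the point -1 is the blue point closest to 4, and connectivity forces some
   blue point to be adjacent to both red points. *)

Section Components.
Variable T : finType.

Definition components (r : rel T) : {set T} := [set fingraph.root r x | x : T].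

Lemma connect_from_isolated (r : rel T) v w :
  (forall u, ~~ r v u) -> connect r v w -> w = v.
Proof.
move=> iso_v /connectP[[|u q]] /=; first by move=> _ ->.
by rewrite (negbTE (iso_v u)).
Qed.

Lemma not_connect_closed (r : rel T) (A : pred T) x y : connect_sym r ->
  (forall u v, r u v -> A u -> A v) -> A x -> ~~ A y -> ~~ connect r x y.
Proof.
move=> r_sym A_closed Ax; apply: contraNN.
by move/(closed_connect (intro_closed r_sym A_closed)); rewrite !unfold_in => <-.
Qed.

End Components.

Section AddEdge.
Variables (T : finType) (r r' : rel T) (a b : T).
Hypothesis r'_sub :
  forall u v, r' u v -> [|| r u v, (u == a) && (v == b) | (u == b) && (v == a)].

Lemma connect_add_edge x y : connect r' x y ->
  [|| connect r x y, connect r x a && connect r b y | connect r x b && connect r a y].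
Proof.
case/connectP=> q; elim: q x => [|z q IHq] x /=; first by move=> _ ->; rewrite connect0.
case/andP=> r'xz q_path y_last; have := IHq z q_path y_last.
have [rxz|nrxz] := boolP (r x z).
  by case/or3P=> [h|/andP[h1 h2]|/andP[h1 h2]]; apply/or3P;
    [constructor 1|constructor 2|constructor 3];
    rewrite ?(connect_trans (connect1 rxz)) ?h1 ?h2.
have /or3P[|/andP[/eqP-> /eqP->]|/andP[/eqP-> /eqP->]] := r'_sub r'xz;
  [by rewrite (negbTE nrxz)| |];
  by case/or3P=> [h|/andP[h1 h2]|/andP[h1 h2]]; rewrite connect0 ?h ?h1 ?h2 ?orbT.
Qed.

Hypotheses (r_sym : connect_sym r) (r'_sym : connect_sym r').
Hypotheses (r_r' : forall u v, r u v -> r' u v) (r'ab : r' a b).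
Hypothesis not_rab : ~~ connect r a b.

Local Notation rt := (fingraph.root r).
Local Notation rt' := (fingraph.root r').

Lemma card_components_add_edge : #|components r| = (#|components r'|).+1.
Proof.
have conn_r_r' x y : connect r x y -> connect r' x y.
  by apply: connect_sub => u v /r_r' /connect1.
have rb_in : rt b \in components r by apply: imset_f.
have -> : components r' = [set rt' u | u in components r :\ rt b].
  apply/setP=> z; apply/imsetP/imsetP => [[x _ ->]|[u /setD1P[_ /imsetP[x _ ->]] ->]];
    last by exists (rt x).
  have rt'_rt : rt' x = rt' (rt x).
    by apply/(fingraph.rootP r'_sym)/conn_r_r'/connect_root.
  have [xb|] := eqVneq (rt x) (rt b); last first.
    by exists (rt x) => //; rewrite !inE imset_f ?andbT.
  exists (rt a).
    rewrite !inE imset_f // andbT; apply: contra not_rab => /eqP.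
    by move/(fingraph.rootP r_sym).
  rewrite rt'_rt xb; apply/(fingraph.rootP r'_sym).
  apply: (connect_trans (y := b)); first by rewrite r'_sym; apply/conn_r_r'/connect_root.
  apply: (connect_trans (y := a)); first by rewrite r'_sym connect1.
  exact/conn_r_r'/connect_root.
rewrite card_in_imset; first by rewrite (cardsD1 (rt b)) rb_in.
move=> u v /setD1P[xb /imsetP[x _ eu]] /setD1P[yb /imsetP[y _ ev]]; subst u v.
move/(fingraph.rootP r'_sym)/connect_add_edge.
case/or3P=> [/(fingraph.rootP r_sym)|/andP[_ h]|/andP[h _]];
  rewrite ?(fingraph.root_root r_sym) //.
- by move: yb; rewrite (fingraph.rootP r_sym h) (fingraph.root_root r_sym) eqxx.
- by move: xb; rewrite -(fingraph.rootP r_sym h) (fingraph.root_root r_sym) eqxx.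
Qed.

End AddEdge.

Section EdgeSets.
Variable n : nat.
Implicit Types (E F : {set 'I_n * 'I_n}).

Lemma connect_adj_sym F : connect_sym (adj F).
Proof. by apply: sym_connect_sym => x y; rewrite /adj orbC. Qed.

Lemma connect_adj_subset E F x y :
  E \subset F -> connect (adj E) x y -> connect (adj F) x y.
Proof.
move=> sEF; apply: connect_sub => u v /orP[] /(subsetP sEF) uvF;
by apply: connect1; rewrite /adj uvF ?orbT.
Qed.

Lemma acyclic_subset E F : E \subset F -> acyclic F -> acyclic E.
Proof.
move=> sEF acF g gE; apply: contra (acF g (subsetP sEF _ gE)).
by apply: connect_adj_subset; apply: setSD.
Qed.

Lemma acyclic_card_components F :
  acyclic F -> #|F| + #|components (adj F)| = n.
Proof.
move: {2}#|F| (erefl #|F|) => k; elim: k F => [|k IHk] F cardF acF.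
  rewrite cardF (cards0_eq cardF) add0n card_imset ?card_ord //.
  move=> x y /(fingraph.rootP (connect_adj_sym _)) /connectP[[|z q]] /=;
    by [move=> _ -> | rewrite /adj !inE].
have [f fF] : exists f, f \in F by apply/card_gt0P; rewrite cardF.
have cardFf : #|F :\ f| = k by move: cardF; rewrite (cardsD1 f F) fF add1n => -[].
have acFf : acyclic (F :\ f) by apply: acyclic_subset acF; apply: subD1set.
rewrite -[RHS](IHk _ cardFf acFf) cardF cardFf addSnnS.
congr (_ + _); symmetry.
apply: (card_components_add_edge (a := f.1) (b := f.2)) (acF f fF).
- move=> u v /orP[] uvF; rewrite /adj !inE.
  + by have [<-|_] := eqVneq (u, v) f; rewrite /= ?eqxx ?uvF ?orbT.
  + by have [<-|_] := eqVneq (v, u) f; rewrite /= ?eqxx ?uvF ?orbT.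
- exact: connect_adj_sym.
- exact: connect_adj_sym.
- by move=> u v /orP[] /setD1P[_ uv]; rewrite /adj uv ?orbT.
- by rewrite /adj -surjective_pairing fF.
Qed.

Lemma connected_neighbour E u v : connected_graph E -> u != v -> exists w, adj E u w.
Proof.
move=> conn uv; case/connectP: (conn u v) => -[/= _ vu|w q /= /andP[uw _] _].
  by rewrite vu eqxx in uv.
by exists w.
Qed.

Definition isolated F v := forall w, ~~ adj F v w.

Lemma card_acyclic_isolated2 F u v : (3 <= n)%N ->
  acyclic F -> u != v -> isolated F u -> isolated F v -> (#|F| <= n - 3)%N.
Proof.
move=> n_ge3 acF uv iso_u iso_v.
have [z] : exists z, z \in ~: [set u; v].
  apply/set0Pn; rewrite -card_gt0; have := cardsC [set u; v].
  by rewrite card_ord cards2 uv; lia.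
rewrite !inE negb_or => /andP[zu zv].
pose rt := fingraph.root (adj F).
have rt_neq x w : isolated F x -> w != x -> (rt x == rt w) = false.
  move=> iso_x wx; apply: contraNF wx => /eqP /(fingraph.rootP (connect_adj_sym F)).
  by move/(connect_from_isolated iso_x) => ->.
have three_components : (3 <= #|components (adj F)|)%N.
  have sub : [set rt u; rt v; rt z] \subset components (adj F).
    by apply/subsetP => x; rewrite !inE => /orP[/orP[]|] /eqP ->; apply: imset_f.
  apply: leq_trans (subset_leq_card sub).
  have vu : v != u by rewrite eq_sym.
  by rewrite -setUA cardsU1 cards2 !inE !rt_neq.
by have := acyclic_card_components acF; lia.
Qed.

End EdgeSets.

Local Open Scope ring_scope.

Section Crossings.
Variable R : realType.
Implicit Types a b c : point R.

Lemma seg_cross_common_start a b c : seg_cross a b a c -> orient a b c = 0.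
Proof.
case=> s [t [/andP[s_gt0 _] _ e1 e2]].
have e1' : s * (b.1 - a.1) = t * (c.1 - a.1) by apply: (addrI a.1).
have e2' : s * (b.2 - a.2) = t * (c.2 - a.2) by apply: (addrI a.2).
have : s * orient a b c = 0.
  transitivity ((s * (b.1 - a.1)) * (c.2 - a.2) - (s * (b.2 - a.2)) * (c.1 - a.1)).
    by rewrite /orient; ring.
  by rewrite e1' e2'; ring.
by move/eqP; rewrite mulf_eq0 gt_eqF //= => /eqP.
Qed.

Lemma seg_cross_common_end a b c : seg_cross a b c b -> orient a b c = 0.
Proof.
case=> s [t [/andP[_ s_lt1] _ e1 e2]].
have e1' : (1 - s) * (b.1 - a.1) = (1 - t) * (b.1 - c.1) by move: e1; lra.
have e2' : (1 - s) * (b.2 - a.2) = (1 - t) * (b.2 - c.2) by move: e2; lra.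
have : (1 - s) * orient a b c = 0.
  transitivity (((1 - s) * (b.2 - a.2)) * (b.1 - c.1) - ((1 - s) * (b.1 - a.1)) * (b.2 - c.2)).
    by rewrite /orient; ring.
  by rewrite e1' e2'; ring.
by move/eqP; rewrite mulf_eq0 subr_eq0 eq_sym lt_eqF //= => /eqP.
Qed.

Lemma weight_subset n (p : 'I_n -> point R) (E F : {set 'I_n * 'I_n}) :
  E \subset F -> weight p E <= weight p F.
Proof.
move=> sEF; rewrite /weight [leRHS](big_setID E) /= (setIidPr sEF) lerDl.
by apply: sumr_ge0 => f _; apply: sqrtr_ge0.
Qed.

Variables (n : nat) (p : 'I_n -> point R) (col : 'I_n -> bool).
Variable E : {set 'I_n * 'I_n}.
Hypotheses (gp : general_position p) (bicol : bichromatic col E).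

Lemma bichromatic_edge_neq e : e \in E -> e.1 != e.2.
Proof. by move/bicol=> [col_e1 col_e2]; apply: contraNneq col_e2 => <-. Qed.

Lemma crossing_edges_disjoint e f : e \in E -> f \in E -> f != e ->
  seg_cross (p e.1) (p e.2) (p f.1) (p f.2) ->
  [&& f.1 != e.1, f.1 != e.2, f.2 != e.1 & f.2 != e.2].
Proof.
move=> eE fE fe cross; have [_ no3] := gp.
have [col_e1 col_e2] := bicol eE; have [col_f1 col_f2] := bicol fE.
have e12 := bichromatic_edge_neq eE.
have f1e2 : f.1 != e.2 by apply: contraNneq col_e2 => <-.
have f2e1 : f.2 != e.1 by apply: contraNneq col_f2 => ->.
rewrite f1e2 f2e1 /=.
have edge_eq : f.1 = e.1 -> f.2 = e.2 -> f = e.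
  by move=> h1 h2; rewrite [f]surjective_pairing [e]surjective_pairing h1 h2.
apply/andP; split; apply/eqP.
- move=> f1e1; move: cross; rewrite f1e1 => /seg_cross_common_start /eqP.
  apply/negP/no3 => //; last by rewrite eq_sym.
  by apply: contraNneq fe => /esym f2e2; apply/eqP/edge_eq.
- move=> f2e2; move: cross; rewrite f2e2 => /seg_cross_common_end /eqP.
  apply/negP/no3 => //; first by rewrite eq_sym.
  by apply: contraNneq fe => /esym f1e1; apply/eqP/edge_eq.
Qed.

Lemma crossings_le_acyclic e : (3 <= n)%N -> acyclic E -> e \in E ->
  (crossings p E e <= n - 3)%N.
Proof.
move=> n_ge3 acE eE; rewrite /crossings; set C := [set f in E | _].
have acC : acyclic C.
  by apply: acyclic_subset acE; apply/subsetP => f; rewrite inE => /andP[].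
have avoid f : f \in C -> [&& f.1 != e.1, f.1 != e.2, f.2 != e.1 & f.2 != e.2].
  by rewrite inE => /and3P[fE fe /asboolP]; apply: crossing_edges_disjoint.
have iso_end v : (v == e.1) || (v == e.2) -> isolated C v.
  move=> /orP[]/eqP-> w; apply/orP=> -[]/avoid/and4P[] /=; rewrite ?eqxx //.
apply: card_acyclic_isolated2 n_ge3 acC (bichromatic_edge_neq eE) (iso_end _ _) (iso_end _ _);
  by rewrite eqxx ?orbT.
Qed.

End Crossings.

Section ParabolaExample.
Variables (R : realType) (m : nat).
Local Notation N := m.+3.

Definition xcoord (i : 'I_N) : R :=
  match nat_of_ord i with 0 => 4 | 1 => -2 | 2 => -1 | k => k%:R^-1 end.
Definition parab (i : 'I_N) : point R := (xcoord i, xcoord i ^+ 2).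
Definition is_red (i : 'I_N) : bool := (i < 2)%N.

Definition red0 : 'I_N := Ordinal (isT : (0 < N)%N).
Definition red1 : 'I_N := Ordinal (isT : (1 < N)%N).
Definition blue2 : 'I_N := Ordinal (isT : (2 < N)%N).
Definition blues : {set 'I_N} := [set b : 'I_N | (2 <= b)%N].
Definition ex_tree : {set 'I_N * 'I_N} := (red0, blue2) |: [set (red1, b) | b in blues].

Lemma xcoord_red0 : xcoord red0 = 4. Proof. by []. Qed.
Lemma xcoord_red1 : xcoord red1 = -2. Proof. by []. Qed.
Lemma xcoord_blue2 : xcoord blue2 = -1. Proof. by []. Qed.

Lemma inv_natS3_bounds k : 0 < (k.+3)%:R^-1 :> R /\ (k.+3)%:R^-1 <= 3^-1 :> R.
Proof. by rewrite invr_gt0 ltr0n lef_pV2 ?posrE // ler_nat. Qed.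

Lemma xcoord_tail (k : 'I_N) : (3 <= k)%N -> 0 < xcoord k <= 3^-1.
Proof.
by case: k => [[|[|[|k]]] //= lt_k] _; have [-> ->] := inv_natS3_bounds k.
Qed.

Lemma xcoord_blue (b : 'I_N) : (2 <= b)%N -> xcoord b = -1 \/ 0 < xcoord b <= 3^-1.
Proof.
move=> b2; have [/xcoord_tail|] := leqP 3 b; first by right.
by case: b b2 => [[|[|[|k]]] ?] //= _ _; left.
Qed.

Lemma xcoord_inj : injective xcoord.
Proof.
move=> [[|[|[|i]]] ?] [[|[|[|j]]] ?] e; apply/val_inj => //=;
  cbv beta iota delta [xcoord nat_of_ord] in e; last first.
  by move/invr_inj/eqP: e; rewrite eqr_nat => /eqP.
(* lra does not treat (k.+3)%:R^-1 as an atom, so it is generalized first. *)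
all: exfalso; move: e.
all: try (have := inv_natS3_bounds i; move: (i.+3)%:R^-1 => x).
all: try (have := inv_natS3_bounds j; move: (j.+3)%:R^-1 => x).
all: lra.
Qed.

Lemma orient_parabola (s t u : R) :
  orient (s, s ^+ 2) (t, t ^+ 2) (u, u ^+ 2) = (t - s) * (u - s) * (u - t).
Proof. by rewrite /orient /=; ring. Qed.

Lemma parab_general_position : general_position parab.
Proof.
split=> [i j [/xcoord_inj //]|i j k ij jk ik].
by rewrite orient_parabola !mulf_neq0 // subr_eq0 (inj_eq xcoord_inj) // eq_sym.
Qed.

Lemma in_ex_tree (u v : 'I_N) :
  ((u, v) \in ex_tree) =
  ((nat_of_ord u == 0) && (nat_of_ord v == 2) || (nat_of_ord u == 1) && (2 <= v))%N.
Proof.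
rewrite !inE xpair_eqE -!val_eqE /=; congr (_ || _).
apply/imsetP/andP => [[b b2 [-> ->]]|[/eqP u1 v2]]; first by rewrite inE in b2.
by exists v; rewrite ?inE //; congr (_, _); apply/val_inj.
Qed.

Lemma ex_tree_acyclic : acyclic ex_tree.
Proof.
move=> [u v]; rewrite in_ex_tree /= => uv_in.
suff [A A_closed Au] : exists2 A : pred 'I_N,
    (forall x y, adj (ex_tree :\ (u, v)) x y -> A x -> A y) & A u && ~~ A v.
  by case/andP: Au => Au Av; apply: not_connect_closed (connect_adj_sym _) A_closed Au Av.
have [uv|[u1 [v2|v3]]] : (nat_of_ord u = 0 /\ nat_of_ord v = 2 \/
    nat_of_ord u = 1 /\ (nat_of_ord v = 2 \/ 3 <= v))%N.
  by move: uv_in; lia.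
3: exists [pred x | nat_of_ord x != nat_of_ord v].
2: exists [pred x | (nat_of_ord x == 1) || (3 <= x)]%N.
1: exists [pred x | nat_of_ord x == 0%N].
all: try move=> x y.
all: by rewrite /adj ?in_setD1 ?in_ex_tree ?xpair_eqE -?val_eqE /=; lia.
Qed.

Lemma ex_tree_bichromatic : bichromatic is_red ex_tree.
Proof. by move=> [u v]; rewrite in_ex_tree /is_red /=; lia. Qed.

Lemma ex_tree_connected : connected_graph ex_tree.
Proof.
have to_red1 x : connect (adj ex_tree) red1 x.
  have [x2|] := leqP 2 x; first by apply/connect1; rewrite /adj in_ex_tree x2.
  case: x => [[|[|x]] lt_x] //= _.
    by apply: (connect_trans (y := blue2)); apply/connect1; rewrite /adj !in_ex_tree.
  by rewrite (_ : Ordinal lt_x = red1) ?connect0 //; apply/val_inj.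
by move=> x y; apply: connect_trans (to_red1 y); rewrite connect_adj_sym.
Qed.

Lemma seg_cross_ex_tree (b : 'I_N) : (3 <= b)%N ->
  seg_cross (parab red0) (parab blue2) (parab red1) (parab b).
Proof.
move=> b3; have /andP[u_gt0 u_le] := xcoord_tail b3.
rewrite /parab xcoord_red0 xcoord_red1 xcoord_blue2 /=.
move: (xcoord b) u_gt0 u_le => u u_gt0 u_le.
(* The chords lie on y = 3x + 4 and y = (u - 2)x + 2u, which meet at abscissa x. *)
pose x := (2 * u - 4) / (5 - u).
have xE : x * (5 - u) = 2 * u - 4 by rewrite /x divfK //; apply/eqP => u5; lra.
pose t := (x + 2) / (u + 2).
have tE : t * (u + 2) = x + 2 by rewrite /t divfK //; apply/eqP => u2; lra.
have x_gt : -1 < x by nra.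
have x_lt : x < u by nra.
exists ((4 - x) / 5), t; split.
- apply/andP; split; lra.
- apply/andP; split; nra.
- have -> : t * (u - -2) = x + 2 by rewrite -tE; ring.
  by rewrite /=; lra.
- have -> : t * (u ^+ 2 - (-2) ^+ 2) = (x + 2) * (u - 2) by rewrite -tE; ring.
  by rewrite /=; nra.
Qed.

Lemma card_tails : #|[set b : 'I_N | (3 <= b)%N]| = m.
Proof.
have -> : [set b : 'I_N | (3 <= b)%N] = [set rshift 3 j | j : 'I_m].
  apply/setP => b; rewrite inE; apply/idP/imsetP => [b3|[j _ ->]]; last by rewrite leq_addr.
  have lt_b3 : (b - 3 < m)%N by have := ltn_ord b; lia.
  by exists (Ordinal lt_b3) => //; apply/val_inj => /=; lia.
rewrite card_imset ?card_ord //.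
by move=> i j /(congr1 val) /= /addnI /val_inj.
Qed.

Lemma crossings_ex_tree : crossings parab ex_tree (red0, blue2) = m.
Proof.
have pair_red1_inj : injective (pair red1 : 'I_N -> 'I_N * 'I_N) by move=> x y [].
rewrite /crossings -[RHS]card_tails -[RHS](card_imset _ pair_red1_inj).
apply: eq_card => -[u v]; rewrite in_set /=; apply/idP/imsetP.
- case/and3P => uv_in uv_neq /asboolP uv_cross.
  have e_in : (red0, blue2) \in ex_tree by rewrite in_ex_tree.
  have /and4P[_ _ _ /= v_neq2] := crossing_edges_disjoint parab_general_position
    ex_tree_bichromatic e_in uv_in uv_neq uv_cross.
  move: uv_in v_neq2; rewrite in_ex_tree -val_eqE /= => uv_in v_neq2.
  exists v; first by rewrite inE; lia.
  by congr (_, _); apply/val_inj => /=; lia.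
- case=> b; rewrite inE => b3 [-> ->]; rewrite in_ex_tree /= ltnW //=.
  exact/asboolP/seg_cross_ex_tree.
Qed.

Lemma red_cases (u : 'I_N) : is_red u -> u = red0 \/ u = red1.
Proof. by case: u => [[|[|u]] ?] // _; [left | right]; apply/val_inj. Qed.

Lemma dist_red1_le_red0 (b : 'I_N) : (2 <= b)%N ->
  dist (parab red1) (parab b) <= dist (parab red0) (parab b).
Proof.
move=> /xcoord_blue xb; rewrite /dist ler_wsqrtr // /parab /=.
rewrite xcoord_red0 xcoord_red1.
by move: (xcoord b) xb => u [->|/andP[u_gt0 u_le]]; nra.
Qed.

Lemma dist_red0_blue2_le (b : 'I_N) : (2 <= b)%N ->
  dist (parab red0) (parab blue2) <= dist (parab red0) (parab b).
Proof.
move=> /xcoord_blue xb; rewrite /dist ler_wsqrtr // /parab /=.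
rewrite xcoord_red0 xcoord_blue2.
by move: (xcoord b) xb => u [->|/andP[u_gt0 u_le]]; nra.
Qed.

Lemma weight_ex_tree : weight parab ex_tree =
  dist (parab red0) (parab blue2) + \sum_(b in blues) dist (parab red1) (parab b).
Proof.
rewrite /weight big_setU1 /=; last by apply/imsetP => -[b _ []].
by rewrite big_imset //= => x y _ _ [].
Qed.

Section AnyBST.
Variable E : {set 'I_N * 'I_N}.
Hypothesis bstE : bst is_red E.

Lemma bst_blue_edge (b : 'I_N) : (2 <= b)%N -> ((red1, b) \in E) || ((red0, b) \in E).
Proof.
have [bicol [conn _]] := bstE; move=> b2.
have [w /orP[bw|wb]] : exists w, adj E b w.
  by apply: (connected_neighbour (v := red0)) conn _; rewrite -val_eqE /=; lia.
- by have [] := bicol _ bw; rewrite /is_red /=; lia.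
- by case: (bicol _ wb) => /= /red_cases[] w_eq _; rewrite -w_eq wb ?orbT.
Qed.

Lemma bst_common_blue :
  exists2 b : 'I_N, (2 <= b)%N & ((red0, b) \in E) && ((red1, b) \in E).
Proof.
have [bicol [conn _]] := bstE.
have [bs /andP[b0 b1]|no_common] := pickP [pred b | ((red0, b) \in E) && ((red1, b) \in E)].
  by exists bs; rewrite ?b0 ?b1 //; have [_] := bicol _ b0; rewrite /is_red /=; lia.
suff: ~~ connect (adj E) red0 red1 by rewrite conn.
pose A := [pred x | (x == red0) || ((red0, x) \in E)].
apply: (not_connect_closed (A := A) (connect_adj_sym _)) => //=.
- move=> u v /orP[] uv /orP[/eqP u0|u0E].
  + by rewrite -u0 uv orbT.
  + by have [red_u _] := bicol _ uv; have [_ /negP] := bicol _ u0E.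
  + by have [_] := bicol _ uv; rewrite /= u0.
  + have [/red_cases[/= v0|/= v1] _] := bicol _ uv; first by rewrite v0 eqxx.
    by move: (no_common u) => /=; rewrite u0E -v1 uv.
- by apply/negP => /bicol[].
Qed.

End AnyBST.

Lemma ex_tree_min E : bst is_red E -> weight parab ex_tree <= weight parab E.
Proof.
move=> bstE; have [bs bs2 /andP[bs0 bs1]] := bst_common_blue bstE.
pose g b := if (red1, b) \in E then (red1, b) else (red0, b).
have gE (b : 'I_N) : (2 <= b)%N -> g b \in E.
  by move/(bst_blue_edge bstE); rewrite /g; case: ifP => // _ /= ->.
have g_inj : injective g by move=> x y; rewrite /g; case: ifP; case: ifP => _ _ [].
have bs_notin : (red0, bs) \notin [set g b | b in blues].
  by apply/imsetP => -[b _]; rewrite /g; case: ifP => // b1 [bbs]; rewrite -bbs bs1 in b1.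
apply: le_trans (weight_subset parab (_ : (red0, bs) |: [set g b | b in blues] \subset E)).
  rewrite weight_ex_tree /weight big_setU1 //= big_imset; last by move=> x y _ _ /g_inj.
  apply: lerD; first exact: dist_red0_blue2_le.
  apply: ler_sum => b; rewrite inE /g => b2; case: ifP => _ //=.
  exact: dist_red1_le_red0.
apply/subsetP => f; rewrite !inE => /orP[/eqP -> //|/imsetP[b]].
by rewrite inE => b2 ->; apply: gE.
Qed.

End ParabolaExample.

Theorem proposition7 (R : realType) :
  (forall (n : nat), (3 <= n)%N ->
   forall (p : 'I_n -> point R) (col : 'I_n -> bool),
     general_position p ->
     (exists i, col i) -> (exists j, ~~ col j) ->
     forall E : {set 'I_n * 'I_n}, min_bst p col E ->
     forall e, e \in E -> (crossings p E e <= n - 3)%N)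
  /\
  (forall (n : nat), (3 <= n)%N ->
   exists (p : 'I_n -> point R) (col : 'I_n -> bool) (E : {set 'I_n * 'I_n}) e,
     [/\ general_position p, (exists i, col i) /\ (exists j, ~~ col j),
         min_bst p col E, e \in E & crossings p E e = (n - 3)%N]).
Proof.
split=> [n n3 p col gp _ _ E [[bicol [_ acE]] _] e eE|].
  exact: crossings_le_acyclic gp bicol e n3 acE eE.
case=> [|[|[|m]]] // _.
exists (@parab R m), (@is_red m), (@ex_tree m), (@red0 m, @blue2 m); split.
- exact: parab_general_position.
- by split; [exists (@red0 m) | exists (@blue2 m)].
- split; last exact: ex_tree_min.
  split; first exact: ex_tree_bichromatic.
  by split; [exact: ex_tree_connected | exact: ex_tree_acyclic].
- by rewrite in_ex_tree.
- by rewrite crossings_ex_tree -addn3 addnK.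
Qed.
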